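(* Let $X=\{(u,v)\in\mathbb{R}^2:uv>0\}\cup\{\theta\}$ with $\theta=(0,0)$, equipped with the relative Euclidean topology $\tau$ and the coordinatewise partial order $\preceq$. Then $(X,\tau,\preceq)$ is a partially ordered topological space, and: (a) $\theta$ is neither a $\preceq$-upper singular point nor a $\preceq$-upper compact bounded point; (b) the map $x^\downarrow\mapsto x$ from $(C^\downarrow(X),\tau_F)$ to $(X,\tau)$ is not continuous at $\theta^\downarrow$.
   Context: A partially ordered topological space is a topological space with a partial order whose graph is closed in $X\times X$. $x^\downarrow=\{u\in X:u\preceq x\}$, $x^\uparrow=\{u\in X:x\preceq u\}$ (taken inside $X$). $C(X)$ = closed subsets of $X$, $C^\downarrow(X)=\{x^\downarrow:x\in X\}$; the Fell topology $\tau_F$ on $C(X)$ is generated by the sets $\{A:A\cap O\neq\emptyset\}$ ($O$ open) and $\{A:A\cap D=\emptyset\}$ ($D$ compact), and $C^\downarrow(X)$ carries the relative topology. $x$ is a $\preceq$-upper singular point if for every open neighborhood $O$ of $x$ there is an open neighborhood $O_1\subseteq O$ of $x$ with no $y\in X\setminus O_1$ satisfying $u\preceq y$ for some $u\in O_1$. $x$ is a $\preceq$-upper compact bounded point if for every open neighborhood $O$ of $x$ there are $a,b\in O$, $b\preceq a$, with $b^\uparrow\cap a^\downarrow\subseteq O$, $x\in\mathrm{int}(b^\uparrow\cap a^\downarrow)$, and $(b^\uparrow\cap a^\downarrow)\setminus\mathrm{int}\,a^\downarrow$ nonempty and compact. *)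

From HB Require Import structures.
From mathcomp Require Import all_boot all_order all_algebra.
From mathcomp Require Import all_classical all_reals all_analysis.
Set Implicit Arguments. Unset Strict Implicit. Unset Printing Implicit Defensive.
Import Order.TTheory GRing.Theory Num.Theory.
Import numFieldNormedType.Exports.
Local Open Scope classical_set_scope.
Local Open Scope ring_scope.

Section General.
Context {X : topologicalType} (le : X -> X -> Prop).

Definition is_partial_order : Prop :=
  [/\ (forall x, le x x),
      (forall x y, le x y -> le y x -> x = y) &
      (forall x y z, le x y -> le y z -> le x z)].

Definition pots : Prop :=
  is_partial_order /\ closed [set p : X * X | le p.1 p.2].

Definition down (x : X) : set X := [set u | le u x].
Definition up (x : X) : set X := [set u | le x u].

Definition CX : set (set X) := [set A | closed A].
Definition Cdown : set (set X) := [set A | exists x, A = down x].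

(** Fell topology on C(X): topology generated by the subbasic sets
    {A : A meets O} (O open) and {A : A misses D} (D compact). *)
Definition fell_basic (Os Ds : seq (set X)) : set (set X) :=
  [set A | CX A /\
     (forall O, O \in Os -> A `&` O !=set0) /\
     (forall D, D \in Ds -> A `&` D = set0)].

Definition fell_open (W : set (set X)) : Prop :=
  W `<=` CX /\
  forall A, W A -> exists Os Ds : seq (set X),
    (forall O, O \in Os -> open O) /\ (forall D, D \in Ds -> compact D) /\
    fell_basic Os Ds A /\ fell_basic Os Ds `<=` W.

(** continuity at x0^down of the map x^down |-> x from (C^down(X), tau_F)
    (relative Fell topology) to (X, tau) *)
Definition down_inv_continuous_at (x0 : X) : Prop :=
  forall O : set X, open O -> O x0 ->
    exists W : set (set X), fell_open W /\ W (down x0) /\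
      (forall x, W (down x) -> O x).

Definition upper_singular (x : X) : Prop :=
  forall O : set X, open O -> O x ->
    exists O1 : set X, [/\ open O1, O1 x, O1 `<=` O &
      ~ (exists y u, ~ O1 y /\ O1 u /\ le u y)].

Definition upper_compact_bounded (x : X) : Prop :=
  forall O : set X, open O -> O x ->
    exists a b : X, [/\ O a, O b, le b a,
      up b `&` down a `<=` O &
      [/\ (up b `&` down a)° x,
          (up b `&` down a) `\` (down a)° !=set0 &
          compact ((up b `&` down a) `\` (down a)°)]].
End General.

Definition Xset (R : realType) : set (R * R) :=
  [set p | 0 < p.1 * p.2] `|` [set (0, 0)].

(** X with the relative Euclidean topology (subtype/initial topology). *)
Notation Xsp R := (set_type (@Xset R)).

Lemma theta_in (R : realType) : ((0 : R), (0 : R)) \in @Xset R.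
Proof. by apply/mem_set; right. Qed.

Definition theta (R : realType) : Xsp R := exist _ ((0 : R), (0 : R)) (@theta_in R).

Definition coord_le (R : realType) (x y : Xsp R) : Prop :=
  (sval x).1 <= (sval y).1 /\ (sval x).2 <= (sval y).2.

From Pilot Require Import Defs.
From mathcomp Require Import all_boot all_order all_algebra.
From mathcomp Require Import all_classical all_reals all_analysis.
From mathcomp Require Import lra.
Import Order.TTheory GRing.Theory Num.Theory.
Import numFieldNormedType.Exports.
Local Open Scope classical_set_scope.
Local Open Scope ring_scope.

(* The points of X with a nonpositive coordinate are exactly those below theta,
   and a continuous function that is positive on a compact set is bounded away
   from 0 there.  If theta is interior to an order interval [b, a], then a lies in
   the open first quadrant, and (b^up /\ a^down) \ int a^down has only points with
   positive coordinates yet contains the segment {a.1} x (0, a.2], so it cannot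
   be compact.  Likewise the compact sets missing theta^down lie in a half-plane
   u >= r > 0, so every Fell neighbourhood of theta^down contains (r/2, 2)^down,
   although (r/2, 2) stays away from theta. *)

Section RealValued.
Context {R : realType} {T : topologicalType}.

Lemma closed_le_fun (f g : T -> R) :
  continuous f -> continuous g -> closed [set x | f x <= g x].
Proof.
move=> cf cg; have -> : [set x | f x <= g x] = (g \- f) @^-1` [set r | 0 <= r].
  by apply/seteqP; split => x /=; rewrite subr_ge0.
by apply: preimage_closed => [x _|]; [exact: (continuousB (cg x) (cf x)) | exact: closed_ge].
Qed.

Lemma open_lt_fun (f : T -> R) (c : R) : continuous f -> open [set x | f x < c].
Proof.
by move=> cf; apply: (@open_comp _ _ f [set y | y < c]); [move=> x _; exact: cf | exact: open_lt].
Qed.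

Lemma compact_pos_lbound {f : T -> R} {K : set T} :
  compact K -> continuous f -> (forall x, K x -> 0 < f x) ->
  exists2 r, 0 < r & forall x, K x -> r <= f x.
Proof.
move=> cK cf fK; have [->|K0] := eqVneq K set0; first by exists 1.
move/set0P: K0 => K0.
have [c /set_mem Kc cmin] := compact_EVT_min K0 cK (continuous_subspaceT cf).
by exists (f c) => [|x Kx]; [exact: fK | apply: cmin; exact/mem_set].
Qed.

Lemma compacts_pos_lbound {f : T -> R} {Ds : seq (set T)} :
  (forall D, D \in Ds -> compact D) -> continuous f ->
  (forall D, D \in Ds -> forall x, D x -> 0 < f x) ->
  exists2 r, 0 < r & forall D, D \in Ds -> forall x, D x -> r <= f x.
Proof.
move=> cDs cf fDs; set U := \big[setU/set0]_(D <- Ds | D \in Ds) D.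
have DU D : D \in Ds -> D `<=` U by move=> DDs x Dx; rewrite /U (big_rem D DDs) DDs; left.
have cU : compact U by apply: bigsetU_compact.
have fU x : U x -> 0 < f x.
  rewrite /U; elim/big_rec: _ => [//|D V DDs IH [/(fDs _ DDs)//|/IH//]].
have [r r0 rf] := compact_pos_lbound cU cf fU.
by exists r => // D DDs x Dx; apply/rf/(DU D).
Qed.
End RealValued.

Section Example.
Variable R : realType.
Implicit Types (z w a b : Xsp R) (u v : R).

Local Notation le := (@coord_le R).

Definition Xpt {u v} (uv_gt0 : 0 < u * v) : Xsp R :=
  exist _ (u, v) (mem_set (or_introl uv_gt0 : Xset (u, v))).

Lemma Xsp_le0E z : ((sval z).1 <= 0) = ((sval z).2 <= 0).
Proof.
case: z => [[u v] /= /set_mem [/= uv_gt0|[-> ->]]]; last by rewrite lexx.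
by apply/idP/idP => ?; nra.
Qed.

Lemma continuous_Xfst : continuous (fun z : Xsp R => (sval z).1).
Proof. by move=> z; apply: continuous_comp; [exact: initial_continuous | exact: cvg_fst]. Qed.

Lemma continuous_Xsnd : continuous (fun z : Xsp R => (sval z).2).
Proof. by move=> z; apply: continuous_comp; [exact: initial_continuous | exact: cvg_snd]. Qed.

Lemma nbhs_XspP z (U : set (Xsp R)) : nbhs z U ->
  exists2 e, 0 < e & forall w,
    (sval z).1 - e < (sval w).1 < (sval z).1 + e ->
    (sval z).2 - e < (sval w).2 < (sval z).2 + e -> U w.
Proof.
case=> _ /= [[V oV <-] Vz VU].
have /nbhs_ballP[e e_gt0 eV] : nbhs (sval z) V by exact: open_nbhs_nbhs.
by exists e => // w w1 w2; apply/VU/eV; split; rewrite /ball /= ltr_distlC.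
Qed.

Lemma pots_coord_le : pots le.
Proof.
split; first split.
- by move=> z; split.
- move=> [[u v] ?] [[u' v'] ?] [/= uu' vv'] [/= u'u v'v]; apply/val_inj => /=.
  by congr pair; apply/eqP; rewrite eq_le ?uu' ?vv' ?u'u ?v'v.
- by move=> z1 z2 z3 [h1 h2] [h3 h4]; split; [exact: le_trans h3 | exact: le_trans h4].
have -> : [set p : Xsp R * Xsp R | le p.1 p.2] =
    [set p | (sval p.1).1 <= (sval p.2).1] `&` [set p | (sval p.1).2 <= (sval p.2).2] by [].
have comp_pr (g : Xsp R -> R) (h : Xsp R * Xsp R -> Xsp R) :
    continuous g -> continuous h -> continuous (g \o h).
  by move=> cg ch q; exact: continuous_comp (ch q) (cg _).
have cfst : continuous (@fst (Xsp R) (Xsp R)) by move=> q; exact: cvg_fst.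
have csnd : continuous (@snd (Xsp R) (Xsp R)) by move=> q; exact: cvg_snd.
by apply: closedI; apply: closed_le_fun;
  [ exact: comp_pr continuous_Xfst cfst | exact: comp_pr continuous_Xfst csnd
  | exact: comp_pr continuous_Xsnd cfst | exact: comp_pr continuous_Xsnd csnd ].
Qed.

Lemma closed_down_coord_le a : closed (Defs.down le a).
Proof.
by apply: closedI; apply: closed_le_fun; [exact: continuous_Xfst | exact: cst_continuous
  | exact: continuous_Xsnd | exact: cst_continuous].
Qed.

Lemma interior_down_coord_le a z :
  (sval z).1 < (sval a).1 -> (sval z).2 < (sval a).2 -> (Defs.down le a)° z.
Proof.
move=> z1 z2; rewrite /interior /=.
have oU : open ([set w : Xsp R | (sval w).1 < (sval a).1] `&` [set w | (sval w).2 < (sval a).2]).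
  by apply: openI; apply: open_lt_fun; [exact: continuous_Xfst | exact: continuous_Xsnd].
by apply: filterS (open_nbhs_nbhs (conj oU (conj z1 z2))) => w [/ltW ? /ltW ?].
Qed.

Lemma interior_down_coord_le_fst a z :
  0 < (sval z).2 -> (Defs.down le a)° z -> (sval z).1 < (sval a).1.
Proof.
move=> z2 /nbhs_XspP[e e_gt0 eU].
have z1 : 0 < (sval z).1 by rewrite ltNge Xsp_le0E -ltNge.
have uv_gt0 : 0 < ((sval z).1 + e / 2) * (sval z).2 by apply: mulr_gt0 => //; lra.
have [/= + _] := eU (Xpt uv_gt0) ltac:(simpl; lra) ltac:(simpl; lra).
lra.
Qed.

Lemma theta_not_upper_singular : ~ upper_singular le (theta R).
Proof.
have oO : open [set w : Xsp R | (sval w).1 < 1] by exact: open_lt_fun continuous_Xfst.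
move=> /(_ _ oO ltr01) [U [_ Utheta UO]]; apply.
have two_gt0 : 0 < 2 * 2 :> R by [].
exists (Xpt two_gt0), (theta R).
by split; [move/UO => /= | split=> //; split => /=]; lra.
Qed.

Lemma theta_not_upper_compact_bounded : ~ upper_compact_bounded le (theta R).
Proof.
move=> /(_ setT openT I)[a [b [_ _ ba _ [/nbhs_XspP[e e_gt0 eI] _ cS]]]].
set I := up le b `&` Defs.down le a in eI cS *.
set S := I `\` (Defs.down le a)° in cS *.
have ee_gt0 : 0 < e / 2 * (e / 2) by apply: mulr_gt0; lra.
have nee_gt0 : 0 < - (e / 2) * - (e / 2) by rewrite mulrNN.
have [_ [/= a1 a2]] := eI (Xpt ee_gt0) ltac:(simpl; lra) ltac:(simpl; lra).
have [[/= b1 b2] _] := eI (Xpt nee_gt0) ltac:(simpl; lra) ltac:(simpl; lra).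
have S_snd_gt0 w : S w -> 0 < (sval w).2.
  move=> [_ intw]; rewrite ltNge; apply/negP => w2; apply: intw.
  by apply: interior_down_coord_le; [rewrite -Xsp_le0E in w2|]; lra.
have [r r_gt0 rS] := compact_pos_lbound cS continuous_Xsnd S_snd_gt0.
have segS t (at_gt0 : 0 < (sval a).1 * t) : t <= (sval a).2 -> S (Xpt at_gt0).
  move=> ta; have t_gt0 : 0 < t by nra.
  split; first by case: ba => [ba1 ba2]; do !split => /=; lra.
  by move=> /(interior_down_coord_le_fst a (Xpt at_gt0) t_gt0) /=; lra.
have a_gt0 : 0 < (sval a).1 * (sval a).2 by nra.
have /rS /= ra := segS _ a_gt0 (lexx _).
have ar_gt0 : 0 < (sval a).1 * (r / 2) by nra.
by have /rS /= := segS _ ar_gt0 ltac:(lra); lra.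
Qed.

Lemma theta_not_down_inv_continuous : ~ down_inv_continuous_at le (theta R).
Proof.
have oO : open [set w : Xsp R | (sval w).2 < 1] by exact: open_lt_fun continuous_Xsnd.
move=> /(_ _ oO ltr01) [W [[_ Wopen] [Wtheta WO]]].
have [Os [Ds [_ [cDs [[_ [meetOs missDs]] basicW]]]]] := Wopen _ Wtheta.
have Ds_fst_gt0 D : D \in Ds -> forall w, D w -> 0 < (sval w).1.
  move=> DDs w Dw; rewrite ltNge; apply/negP => w1.
  suff : (Defs.down le (theta R) `&` D) w by rewrite missDs.
  by split => //; split => /=; [|rewrite -Xsp_le0E].
have [r r_gt0 rDs] := compacts_pos_lbound cDs continuous_Xfst Ds_fst_gt0.
have x_gt0 : 0 < r / 2 * 2 by rewrite mulr_gt0 // divr_gt0.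
have x_basic : fell_basic Os Ds (Defs.down le (Xpt x_gt0)).
  split; first exact: closed_down_coord_le.
  split.
  - move=> O OOs; have [u [[u1 u2] Ou]] := meetOs O OOs.
    by exists u; split => //; split => /=; move: u1 u2 => /=; lra.
  - move=> D DDs; rewrite -subset0 => w [[/= w1 _] Dw].
    by have := rDs D DDs w Dw; lra.
by have /= := WO _ (basicW _ x_basic); lra.
Qed.

End Example.

Theorem mainTheorem3 (R : realType) :
  pots (@coord_le R) /\
  (~ upper_singular (@coord_le R) (theta R) /\
   ~ upper_compact_bounded (@coord_le R) (theta R)) /\
  ~ down_inv_continuous_at (@coord_le R) (theta R).
Proof.
split; first exact: pots_coord_le.
split; last exact: theta_not_down_inv_continuous.
by split; [exact: theta_not_upper_singular | exact: theta_not_upper_compact_bounded].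
Qed.
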